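(* Let $\pi$ be a finite projective plane of order $q$, and let $A=(\mathcal P,\mathcal L,\mathcal I)$ consist of a set $\mathcal P$ of points of $\pi$ and a set $\mathcal L$ of lines of $\pi$, with the incidence $\mathcal I$ inherited from $\pi$, forming a linear space. Assume there is an integer $n$ with $1<n\le q$ such that no point of $\mathcal P$ is incident with more than $n+1$ lines of $\mathcal L$. Then: (a) if $|\mathcal P|=n^2+n+1$, then either $|\mathcal L|=1$ or $A$ is a subplane of $\pi$; (b) if $|\mathcal P|>n^2+n+1$, then $|\mathcal L|=1$.
   Context: A finite projective plane of order $q$ has $q^2+q+1$ points and lines, $q+1$ points on each line and $q+1$ lines through each point; any two distinct points lie on a unique line and any two lines meet in a unique point. $A$ being a linear space means: any two distinct points of $\mathcal P$ lie on exactly one line of $\mathcal L$, and each line of $\mathcal L$ contains at least two points of $\mathcal P$. A subplane of $\pi$ is a projective plane $(\mathcal P_0,\mathcal L_0,\mathcal I_0)$ with $\mathcal P_0$ a set of points of $\pi$, $\mathcal L_0$ a set of lines of $\pi$, and $\mathcal I_0$ contained in the incidence of $\pi$ (i.e. with inherited incidence, any two points of $\mathcal P_0$ lie on a unique line of $\mathcal L_0$, any two lines of $\mathcal L_0$ meet in a unique point of $\mathcal P_0$, each line of $\mathcal L_0$ has at least three points of $\mathcal P_0$, and there are four points of $\mathcal P_0$ no three on a line of $\mathcal L_0$). *)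

From mathcomp Require Import all_boot.
Set Implicit Arguments. Unset Strict Implicit. Unset Printing Implicit Defensive.

Definition proj_plane (P L : finType) (inc : P -> L -> bool) (q : nat) : Prop :=
  [/\ #|P| = q ^ 2 + q + 1 /\ #|L| = q ^ 2 + q + 1,
      (forall l : L, #|[set x : P | inc x l]| = q.+1),
      (forall x : P, #|[set l : L | inc x l]| = q.+1),
      (forall x y : P, x != y -> #|[set l : L | inc x l && inc y l]| = 1) &
      (forall l m : L, l != m -> #|[set x : P | inc x l && inc x m]| = 1)].

Definition linear_space (P L : finType) (inc : P -> L -> bool)
    (Ps : {set P}) (Ls : {set L}) : Prop :=
  (forall x y, x \in Ps -> y \in Ps -> x != y ->
      #|[set l in Ls | inc x l && inc y l]| = 1) /\
  (forall l, l \in Ls -> 2 <= #|[set x in Ps | inc x l]|).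

Definition subplane (P L : finType) (inc : P -> L -> bool)
    (Ps : {set P}) (Ls : {set L}) : Prop :=
  [/\ (forall x y, x \in Ps -> y \in Ps -> x != y ->
        #|[set l in Ls | inc x l && inc y l]| = 1),
      (forall l m, l \in Ls -> m \in Ls -> l != m ->
        #|[set x in Ps | inc x l && inc x m]| = 1),
      (forall l, l \in Ls -> 3 <= #|[set x in Ps | inc x l]|) &
      (exists a b c d : P,
        [/\ [&& a \in Ps, b \in Ps, c \in Ps & d \in Ps],
            [&& a != b, a != c, a != d, b != c, b != d & c != d] &
            (forall l, l \in Ls ->
               ~~ [&& inc a l, inc b l & inc c l] /\
               ~~ [&& inc a l, inc b l & inc d l] /\
               ~~ [&& inc a l, inc c l & inc d l] /\
               ~~ [&& inc b l, inc c l & inc d l])])].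

From mathcomp Require Import all_boot zify.
Set Implicit Arguments. Unset Strict Implicit. Unset Printing Implicit Defensive.

(* Counting the other points along the lines through a point x of the linear
   space gives |P| = 1 + sum over the lines k through x of (|k| - 1).  A line
   not through x meets each of these lines at most once and is joined to x by
   all of its points, so once there are two lines every line has at most n + 1
   points, and hence |P| <= 1 + (n + 1) n.  Equality forces every point to lie
   on exactly n + 1 lines of exactly n + 1 points; then for lines l, m and a
   point x of l off m the same count shows that l meets m, and since n + 1 >= 3
   a quadrangle is easily found. *)

Lemma double_count (T U : finType) (r : T -> U -> bool) (A : {set T}) (B : {set U}) :
  \sum_(y in A) #|[set k in B | r y k]| = \sum_(k in B) #|[set y in A | r y k]|.
Proof.
have card_sum (V : finType) (C : {set V}) (p : pred V) :
    #|[set z in C | p z]| = \sum_(z in C) (p z : nat).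
  rewrite -sum1_card big_mkcond [RHS]big_mkcond /=.
  by apply: eq_bigr => z _; rewrite inE; case: (z \in C); case: (p z).
under eq_bigr do rewrite card_sum.
by rewrite exchange_big /=; apply: eq_bigr => k _; rewrite card_sum.
Qed.

Lemma sum_leq_const_eq (T : finType) (A : {set T}) (f : T -> nat) (k : nat) :
  {in A, forall i, f i <= k} -> \sum_(i in A) f i = #|A| * k ->
  {in A, forall i, f i = k}.
Proof.
move=> f_le sum_eq i iA; apply/eqP; rewrite eqn_leq f_le //= leqNgt.
apply/negP => f_lt.
have : \sum_(j in A) f j < \sum_(j in A) k.
  rewrite (bigD1 i) // [X in _ < X](bigD1 i) //= -addSn.
  by apply: leq_add => //; apply: leq_sum => j /andP[jA _]; apply: f_le.
by rewrite sum_nat_const sum_eq ltnn.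
Qed.

Lemma ltn_card_setD1 (T : finType) (A : {set T}) (x : T) (k : nat) :
  k.+1 < #|A| -> k < #|A :\ x|.
Proof. by rewrite (cardsD1 x A); case: (x \in A) => /=; lia. Qed.

Section LinearSpace.

Variables (P L : finType) (inc : P -> L -> bool) (Ps : {set P}) (Ls : {set L}).
Hypothesis LS : linear_space inc Ps Ls.

Definition points_on (l : L) : {set P} := [set x in Ps | inc x l].
Definition pencil (x : P) : {set L} := [set l in Ls | inc x l].

Definition quadrangle (a b c d : P) : Prop :=
  [/\ [&& a \in Ps, b \in Ps, c \in Ps & d \in Ps],
      [&& a != b, a != c, a != d, b != c, b != d & c != d] &
      (forall l, l \in Ls ->
         ~~ [&& inc a l, inc b l & inc c l] /\
         ~~ [&& inc a l, inc b l & inc d l] /\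
         ~~ [&& inc a l, inc c l & inc d l] /\
         ~~ [&& inc b l, inc c l & inc d l])].

Lemma card_pencil_join (x y : P) :
  x \in Ps -> y \in Ps -> x != y -> #|[set k in pencil x | inc y k]| = 1.
Proof.
move=> xP yP xy; rewrite -(LS.1 x y xP yP xy).
by apply: eq_card => k; rewrite !inE andbA.
Qed.

Lemma join_exists (x y : P) :
  x \in Ps -> y \in Ps -> x != y -> exists2 k, k \in pencil x & inc y k.
Proof.
move=> xP yP xy; have /eqP/cards1P [k Hk] := card_pencil_join xP yP xy.
have : k \in [set k] by rewrite set11.
by rewrite -Hk inE => /andP[kx yk]; exists k.
Qed.

Lemma line_unique (a b : P) (l m : L) :
  a \in Ps -> b \in Ps -> a != b -> l \in Ls -> m \in Ls ->
  inc a l -> inc b l -> inc a m -> inc b m -> l = m.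
Proof.
move=> aP bP ab lL mL al bl am bm.
have /eqP/cards1P [k Hk] := LS.1 a b aP bP ab.
have : l \in [set k] by rewrite -Hk inE lL al bl.
have : m \in [set k] by rewrite -Hk inE mL am bm.
by rewrite !inE => /eqP -> /eqP ->.
Qed.

Lemma exists_point_off_line (l m : L) (Y : {set P}) :
  l \in Ls -> m \in Ls -> l != m -> Y \subset points_on m -> 1 < #|Y| ->
  exists2 x, x \in Y & ~~ inc x l.
Proof.
move=> lL mL lm /subsetP Ym /card_gt1P [x [y [xY yY xy]]].
case xl: (inc x l); last by exists x; rewrite ?xl.
case yl: (inc y l); last by exists y; rewrite ?yl.
move: (Ym x xY) (Ym y yY); rewrite !inE => /andP[xP xm] /andP[yP ym].
by rewrite (line_unique xP yP xy lL mL xl yl xm ym) eqxx in lm.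
Qed.

Lemma lines_nonempty : 1 < #|Ps| -> 0 < #|Ls|.
Proof.
case/card_gt1P => x [y [xP yP xy]]; have [k kx _] := join_exists xP yP xy.
by apply/card_gt0P; exists k; move: kx; rewrite inE => /andP[].
Qed.

Lemma card_points_pencil (x : P) (Y : {set P}) :
  x \in Ps -> Y \subset Ps :\ x ->
  #|Y| = \sum_(k in pencil x) #|[set y in Y | inc y k]|.
Proof.
move=> xP /subsetP sub_Y; rewrite -double_count -sum1_card.
apply: eq_bigr => y /sub_Y; rewrite !inE => /andP[yx yP].
by rewrite card_pencil_join // eq_sym.
Qed.

Lemma card_points_through (x : P) :
  x \in Ps -> #|Ps| = 1 + \sum_(k in pencil x) (#|points_on k| - 1).
Proof.
move=> xP; rewrite (cardsD1 x Ps) xP (card_points_pencil xP (subxx _)).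
congr (_ + _); apply: eq_bigr => k; rewrite inE => /andP[_ xk].
rewrite (cardsD1 x (points_on k)) !inE xP xk addKn.
by apply: eq_card => y; rewrite !inE andbA.
Qed.

Lemma pencil_meets_line (x : P) (l : L) :
  l \in Ls -> ~~ inc x l ->
  {in pencil x, forall k, #|[set y in points_on l | inc y k]| <= 1}.
Proof.
move=> lL xl k; rewrite inE => /andP[kL xk].
apply/card_le1_eqP => a b; rewrite !inE => /andP[/andP[aP al] ak] /andP[/andP[bP bl] bk].
apply/eqP; apply: contraTT xl; rewrite eq_sym => ab.
by rewrite (line_unique aP bP ab lL kL al bl ak bk) xk.
Qed.

Lemma points_on_off_point (x : P) (l : L) :
  ~~ inc x l -> points_on l \subset Ps :\ x.
Proof.
move=> xl; apply/subsetP => y; rewrite !inE => /andP[yP yl]; rewrite yP andbT.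
by apply: contraNneq xl => <-.
Qed.

Lemma card_line_le_pencil (x : P) (l : L) :
  x \in Ps -> l \in Ls -> ~~ inc x l -> #|points_on l| <= #|pencil x|.
Proof.
move=> xP lL xl; rewrite (card_points_pencil xP (points_on_off_point xl)).
by rewrite -sum1_card; apply: leq_sum; apply: pencil_meets_line.
Qed.

Lemma pencil_meets_line_once (x : P) (l : L) :
  x \in Ps -> l \in Ls -> ~~ inc x l -> #|points_on l| = #|pencil x| ->
  {in pencil x, forall k, #|[set y in points_on l | inc y k]| = 1}.
Proof.
move=> xP lL xl card_l; apply: sum_leq_const_eq (pencil_meets_line lL xl) _.
by rewrite muln1 -card_l (card_points_pencil xP (points_on_off_point xl)).
Qed.

Lemma not_collinear_off_line (a b c : P) (l : L) :
  a \in Ps -> b \in Ps -> a != b -> l \in Ls -> inc a l -> inc b l -> ~~ inc c l ->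
  {in Ls, forall t, ~~ [&& inc a t, inc b t & inc c t]}.
Proof.
move=> aP bP ab lL al bl cl t tL; apply/and3P => -[a_t b_t c_t].
by rewrite (line_unique aP bP ab lL tL al bl a_t b_t) c_t in cl.
Qed.

Lemma exists_quadrangle :
  1 < #|Ls| -> {in Ls, forall l, 3 <= #|points_on l|} ->
  {in Ps, forall x, 3 <= #|pencil x|} -> exists a b c d, quadrangle a b c d.
Proof.
move=> /card_gt1P [l [m [lL mL lm]]] line_ge3 pencil_ge3.
have [c] := exists_point_off_line lL mL lm (subxx _) (LS.2 m mL).
rewrite inE => /andP[cP _] cl.
have /card_gt1P [a [b []]] := LS.2 l lL.
rewrite !inE => /andP[aP al] /andP[bP bl] ab.
have ca : c != a by apply: contraNneq cl => ->.
have cb : c != b by apply: contraNneq cl => ->.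
have [kac kac_c akac] := join_exists cP aP ca.
have [kbc kbc_c bkbc] := join_exists cP bP cb.
(* d lies on a third line k through c, off l: no three of a, b, c, d are then
   collinear. *)
have /card_gt0P [k] : 0 < #|pencil c :\ kac :\ kbc|.
  exact: ltn_card_setD1 (ltn_card_setD1 _ (pencil_ge3 c cP)).
rewrite !inE => /and3P[k_kbc k_kac /andP[kL ck]].
have lk : l != k by apply: contraNneq cl => ->.
have [d] : exists2 d, d \in points_on k :\ c & ~~ inc d l.
  apply: (exists_point_off_line lL kL lk (subD1set _ _)).
  exact: ltn_card_setD1 (line_ge3 k kL).
rewrite !inE => /andP[dc /andP[dP dk]] dl.
have d_off (t : L) : t \in pencil c -> t != k -> ~~ inc d t.
  rewrite inE => /andP[tL ct] tk; apply: contra tk => dt.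
  by rewrite (line_unique cP dP _ tL kL ct dt ck dk) // eq_sym.
move: kac_c kbc_c; rewrite !inE => /andP[kacL ckac] /andP[kbcL ckbc].
exists a, b, c, d; split.
- by rewrite aP bP cP dP.
- rewrite ab (eq_sym a c) ca (eq_sym b c) cb (eq_sym c d) dc /=.
  by rewrite andbT; apply/andP; split; apply: contraNneq dl => <-.
move=> t tL; split; [|split; [|split]].
- exact: not_collinear_off_line aP bP ab lL al bl cl t tL.
- exact: not_collinear_off_line aP bP ab lL al bl dl t tL.
- have := d_off kac; rewrite inE kacL ckac eq_sym k_kac => /(_ isT isT) dkac.
  rewrite eq_sym in ca.
  exact: not_collinear_off_line aP cP ca kacL akac ckac dkac t tL.
- have := d_off kbc; rewrite inE kbcL ckbc eq_sym k_kbc => /(_ isT isT) dkbc.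
  rewrite eq_sym in cb.
  exact: not_collinear_off_line bP cP cb kbcL bkbc ckbc dkbc t tL.
Qed.

Section BoundedPencils.

Variable n : nat.
Hypotheses (Ls_gt1 : 1 < #|Ls|) (pencil_le : {in Ps, forall x, #|pencil x| <= n.+1}).

Lemma card_line_le (l : L) : l \in Ls -> #|points_on l| <= n.+1.
Proof.
move=> lL; have /card_gt0P [m] : 0 < #|Ls :\ l| by apply: ltn_card_setD1.
rewrite !inE => /andP[ml mL]; rewrite eq_sym in ml.
have [x] := exists_point_off_line lL mL ml (subxx _) (LS.2 m mL).
rewrite inE => /andP[xP _] xl.
exact: leq_trans (card_line_le_pencil xP lL xl) (pencil_le xP).
Qed.

Lemma sum_pencil_le (x : P) :
  \sum_(k in pencil x) (#|points_on k| - 1) <= #|pencil x| * n.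
Proof.
rewrite -sum_nat_const; apply: leq_sum => k; rewrite inE => /andP[kL _].
by rewrite leq_subLR add1n card_line_le.
Qed.

Lemma card_points_le : #|Ps| <= n ^ 2 + n + 1.
Proof.
have [-> | [x xP]] := set_0Vmem Ps; first by rewrite cards0.
rewrite (card_points_through xP).
have := leq_trans (sum_pencil_le x) (leq_mul (pencil_le xP) (leqnn n)).
set S := \sum_(_ in _) _; rewrite -mulnn; lia.
Qed.

Section Extremal.

Hypotheses (n_gt1 : 1 < n) (card_Ps : #|Ps| = n ^ 2 + n + 1).

Lemma pencil_extremal (x : P) :
  x \in Ps -> #|pencil x| = n.+1 /\ {in pencil x, forall k, #|points_on k| = n.+1}.
Proof.
move=> xP; have := card_points_through xP; rewrite card_Ps -mulnn.
have := sum_pencil_le x; have := pencil_le xP.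
set S := \sum_(_ in _) _; set c := #|pencil x| => c_le S_le S_eq.
have c_eq : c = n.+1 by nia.
split=> // k kx; have k_ge2 : 1 < #|points_on k|.
  by move: (kx); rewrite inE => /andP[kL _]; apply: LS.2.
have f_le : {in pencil x, forall k, #|points_on k| - 1 <= n}.
  by move=> t; rewrite inE => /andP[tL _]; rewrite leq_subLR add1n card_line_le.
have := sum_leq_const_eq f_le _ kx; rewrite -/S -/c c_eq.
by move=> /(_ ltac:(lia)); lia.
Qed.

Lemma card_line_extremal (l : L) : l \in Ls -> #|points_on l| = n.+1.
Proof.
move=> lL; have /card_gt0P [x] : 0 < #|points_on l| by apply: ltnW (LS.2 l lL).
rewrite inE => /andP[xP xl].
by apply: (pencil_extremal xP).2; rewrite inE lL xl.
Qed.

Lemma lines_meet (l m : L) :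
  l \in Ls -> m \in Ls -> l != m -> #|[set x in Ps | inc x l && inc x m]| = 1.
Proof.
move=> lL mL lm; rewrite eq_sym in lm.
have [x] := exists_point_off_line mL lL lm (subxx _) (LS.2 l lL).
rewrite inE => /andP[xP xl] xm.
have [pencil_x _] := pencil_extremal xP.
have card_m : #|points_on m| = #|pencil x| by rewrite pencil_x card_line_extremal.
have <- := pencil_meets_line_once xP mL xm card_m (_ : l \in pencil x).
  by apply: eq_card => y; rewrite !inE andbA andbAC.
by rewrite inE lL xl.
Qed.

Lemma subplane_extremal : subplane inc Ps Ls.
Proof.
split.
- exact: LS.1.
- exact: lines_meet.
- by move=> l lL; rewrite card_line_extremal.
apply: exists_quadrangle => // [l lL | x xP].
  by rewrite card_line_extremal.
by rewrite (pencil_extremal xP).1.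
Qed.

End Extremal.

End BoundedPencils.

End LinearSpace.

Theorem lemma4p3 (P L : finType) (inc : P -> L -> bool) (q : nat)
    (Ps : {set P}) (Ls : {set L}) (n : nat) :
  proj_plane inc q ->
  linear_space inc Ps Ls ->
  1 < n -> n <= q ->
  (forall x, x \in Ps -> #|[set l in Ls | inc x l]| <= n.+1) ->
  (#|Ps| = n ^ 2 + n + 1 -> #|Ls| = 1 \/ subplane inc Ps Ls) /\
  (n ^ 2 + n + 1 < #|Ps| -> #|Ls| = 1).
Proof.
move=> _ LS n_gt1 _ pencil_le.
have one_or_more_lines : n ^ 2 + n + 1 <= #|Ps| -> #|Ls| = 1 \/ 1 < #|Ls|.
  move=> Ps_ge; have : 0 < #|Ls| by apply: (lines_nonempty LS); lia.
  by case: (ltnP 1 #|Ls|) => [|Ls_le1 Ls_gt0]; [right | left; lia].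
split=> [card_Ps | Ps_gt].
  have [|Ls_gt1] := one_or_more_lines (eq_leq (esym card_Ps)); first by left.
  by right; apply: (subplane_extremal LS Ls_gt1 pencil_le n_gt1 card_Ps).
have [//|Ls_gt1] := one_or_more_lines (ltnW Ps_gt).
by have := card_points_le LS Ls_gt1 pencil_le; lia.
Qed.
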